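(* Let $\psi\in C^1(\mathbb{R})$ satisfy: $\psi(0)=1$, $\psi$ is even, there exist $C>0$ and $\delta>1$ with $|\psi(x)|+|x\psi'(x)|\leq C\langle x\rangle^{-\delta}$ for all $x\in\mathbb{R}$, and $A_\psi:=\int_{\mathbb{R}}\psi(x)\,\mathrm{d}x\neq 0$. Let $\mu$ be a probability measure on $\mathbb{R}$ and $0\le\alpha\le 1$. Then $C^\alpha_{\mu,\psi}(x)$ is finite for any $x$ for which $D^\alpha_\mu(x)$ is finite; and, if $\psi$ is non-negative, then for each $x$, $C^\alpha_{\mu,\psi}(x)$ and $D^\alpha_\mu(x)$ are both finite or both infinite.
   Context: $\langle x\rangle=(1+x^2)^{1/2}$. For $a>0$, $\psi_a(x)=\psi(x/a)$ and $(\psi_a*\mu)(x)=\int\psi_a(x-y)\,\mathrm{d}\mu(y)$. Define $C^\alpha_{\mu,\psi}(x)=\limsup_{a\to0}\frac{(\psi_a*\mu)(x)}{a^\alpha}$ and $D^\alpha_\mu(x)=\limsup_{\varepsilon\to0}\frac{\mu((x-\varepsilon,x+\varepsilon))}{(2\varepsilon)^\alpha}$ (limits over positive $a,\varepsilon$). *)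

From HB Require Import structures.
From mathcomp Require Import all_boot all_order all_algebra.
From mathcomp Require Import all_classical all_reals all_analysis.
Set Implicit Arguments. Unset Strict Implicit. Unset Printing Implicit Defensive.
Import Order.TTheory GRing.Theory Num.Theory.
Import numFieldNormedType.Exports.
Local Open Scope classical_set_scope.
Local Open Scope ring_scope.

Definition jbr {R : realType} (x : R) : R := Num.sqrt (1 + x ^+ 2).

Definition conv_scaled {R : realType} (psi : R -> R)
  (mu : probability R R) (a x : R) : \bar R :=
  (\int[mu]_y (psi ((x - y) / a))%:E)%E.

Definition Calpha {R : realType} (alpha : R) (mu : probability R R)
  (psi : R -> R) (x : R) : \bar R :=
  limf_esup (fun a : R => (conv_scaled psi mu a x * ((a `^ alpha)^-1)%:E)%E)
    (0^'+).

Definition Dalpha {R : realType} (alpha : R) (mu : probability R R)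
  (x : R) : \bar R :=
  limf_esup (fun e : R =>
      (mu [set` `]x - e, x + e[%R] * (((2 * e) `^ alpha)^-1)%:E)%E)
    (0^'+).

(* If D^alpha_mu(x) is finite, then mu((x - e, x + e)) <= K e^alpha for every
   e > 0.  On the dyadic shell |x - y| ~ 2^k a we have
   |psi((x - y)/a)| <= C 2^(-k delta), so
   |(psi_a * mu)(x)| <= sum_k C 2^(-k delta) K (2^k a)^alpha = O(a^alpha),
   the series being geometric because alpha <= 1 < delta.
   Conversely, if psi >= 0 is continuous with psi(0) = 1, then psi >= 1/2 on
   some (-r, r), hence (psi_a * mu)(x) >= mu((x - r a, x + r a)) / 2 and a
   bound on C^alpha_{mu,psi}(x) bounds D^alpha_mu(x). *)

From HB Require Import structures.
From mathcomp Require Import all_boot all_order all_algebra.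
From mathcomp Require Import all_classical all_reals all_analysis.
From mathcomp Require Import measurable_realfun.
From mathcomp Require Import ring lra.
Import Order.TTheory GRing.Theory Num.Theory.
Import numFieldNormedType.Exports.
Local Open Scope classical_set_scope.
Local Open Scope ring_scope.

Section limf_esup_bounds.
Context {T : choiceType} {X : filteredType T} {R : realType}.
Implicit Types (f : X -> \bar R) (F : set_system X).
Local Open Scope ereal_scope.

Lemma limf_esup_le_near f F (M : \bar R) :
  (\forall y \near F, f y <= M) -> limf_esup f F <= M.
Proof.
move=> FM; rewrite limf_esupE; apply: ge_ereal_inf.
exists (ereal_sup (f @` [set y | f y <= M])); first by exists [set y | f y <= M].
by apply/ereal_supP => _ [y yM <-].
Qed.

Lemma limf_esup_ge_near f F (M : \bar R) : ProperFilter F ->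
  (\forall y \near F, M <= f y) -> M <= limf_esup f F.
Proof.
move=> PF FM; rewrite limf_esupE; apply/ereal_infP => _ [V FV <-].
have [y [Vy My]] : exists y, (V `&` [set y | M <= f y]) y.
  by apply: (@filter_ex _ F); exact: filterI.
by apply: le_trans My _; apply: ereal_sup_ubound; exists y.
Qed.

Lemma limf_esup_fin_num f F (m M : R) : ProperFilter F ->
  (\forall y \near F, m%:E <= f y <= M%:E) -> limf_esup f F \is a fin_num.
Proof.
move=> PF FmM; rewrite fin_numElt; apply/andP; split.
- apply: (lt_le_trans (ltNyr m)); apply: limf_esup_ge_near.
  by apply: filterS FmM => y /andP[].
- apply: (le_lt_trans _ (ltry M)); apply: limf_esup_le_near.
  by apply: filterS FmM => y /andP[].
Qed.

Lemma limf_esup_fin_num_ubound f F : Filter F ->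
  limf_esup f F \is a fin_num -> exists M : R, \forall y \near F, f y <= M%:E.
Proof.
move=> FF; rewrite fin_numElt => /andP[_]; rewrite limf_esupE.
move=> /ereal_inf_ltP[_ [V FV <-]].
case E: (ereal_sup (f @` V)) => [r| |] // _.
- exists r; apply: filterS FV => y Vy.
  by rewrite -E; apply: ereal_sup_ubound; exists y.
- exists 0%R; apply: filterS FV => y Vy.
  have : f y <= -oo by rewrite -E; apply: ereal_sup_ubound; exists y.
  by rewrite leeNy_eq => /eqP ->; rewrite leNye.
Qed.

End limf_esup_bounds.

Lemma near_right0P {R : realFieldType} (P : R -> Prop) :
  (\forall a \near 0^'+, P a) <->
  exists2 e : R, 0 < e & forall a, 0 < a < e -> P a.
Proof.
split.
- move=> /nbhs_ballP[e /= e0 ballP]; exists e => // a /andP[a0 ae].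
  by apply: ballP => //; rewrite /ball /= sub0r normrN gtr0_norm.
- move=> [e e0 smallP]; apply/nbhs_ballP; exists e => //= a.
  rewrite /ball /= sub0r normrN => ae a0; apply: smallP; rewrite a0 /=.
  by rewrite gtr0_norm in ae.
Qed.

Lemma nneseries_geometric {R : realType} (z : R) : 0 <= z < 1 ->
  (\sum_(k <oo) (z ^+ k)%:E = ((1 - z)^-1)%:E)%E.
Proof.
move=> /andP[z0 z1]; apply/cvg_lim => //; apply: cvg_EFin.
  by apply: nearW => n; rewrite sumEFin.
have -> : (1 - z)^-1 = 1 * (1 - z)^-1 by rewrite mul1r.
rewrite (_ : _ \o _ = series (geometric 1 z)).
  by apply: cvg_geometric_series; rewrite ger0_norm.
apply/funext => n; rewrite /= sumEFin /series /=.
by under [RHS]eq_bigr do rewrite mul1r.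
Qed.

Lemma powR_lt1 {R : realType} (a s : R) : 1 < a -> s < 0 -> a `^ s < 1.
Proof.
move=> a1 s0; rewrite /powR gt_eqF ?(lt_trans ltr01 a1)// expR_lt1.
by rewrite nmulr_rlt0 // ln_gt0.
Qed.

Lemma powR_exprn {R : realType} (a d : R) (n : nat) : 0 <= a ->
  (a ^+ n) `^ d = (a `^ d) ^+ n.
Proof.
move=> a0; rewrite -powR_mulrn// -powRrM mulrC powRrM powR_mulrn//.
exact: powR_ge0.
Qed.

Section japanese_bracket.
Context {R : realType}.
Implicit Types t d : R.

Lemma jbr_ge1 t : 1 <= jbr t.
Proof.
by rewrite /jbr -{1}sqrtr1 ler_sqrt ?lerDl ?sqr_ge0 // addr_ge0 ?sqr_ge0.
Qed.

Lemma jbr_gt0 t : 0 < jbr t.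
Proof. exact: lt_le_trans ltr01 (jbr_ge1 t). Qed.

Lemma jbr_ge_norm t : `|t| <= jbr t.
Proof. by rewrite /jbr -sqrtr_sqr ler_sqrt ?lerDr // addr_ge0 ?sqr_ge0. Qed.

Lemma jbr_powRN_le1 t d : 0 <= d -> jbr t `^ (- d) <= 1.
Proof.
move=> d0; rewrite powRN invf_le1 ?powR_gt0 ?jbr_gt0//.
by rewrite -(powRr0 (jbr t)) ler_powR ?jbr_ge1.
Qed.

(* Pick the least k with |t| < 2^k: then 2^(k-1) <= |t| <= <t>, which gives
   <t>^-d <= 2^(-d(k-1)). *)
Lemma jbr_powRN_le_dyadic t d : 0 <= d ->
  exists k : nat, `|t| < 2 ^+ k /\
    jbr t `^ (- d) <= (2 `^ (- d)) ^+ k / 2 `^ (- d).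
Proof.
move=> d0; set q := 2 `^ (- d).
have q0 : 0 < q by rewrite powR_gt0.
have q1 : q <= 1 by rewrite /q -[leRHS](powRr0 2) ler_powR ?ler1n// oppr_le0.
have [k tk kmin] :
    exists2 k, `|t| < 2 ^+ k & forall j, `|t| < 2 ^+ j -> (k <= j)%N.
  have ex : exists n, `|t| < 2 ^+ n.
    exists (Num.Def.archi_bound `|t|).
    apply: (lt_le_trans (archi_boundP (normr_ge0 t))).
    by rewrite -natrX ler_nat ltnW // ltn_expl.
  by case: (ex_minnP ex) => k; exists k.
exists k; split => //; case: k tk kmin => [|j] tk kmin.
  by rewrite expr0 mul1r (le_trans (jbr_powRN_le1 t _ d0)) // invf_ge1.
rewrite exprS mulrC mulrA mulVf ?gt_eqF // mul1r.
have jt : 2 ^+ j <= `|t| by rewrite leNgt; apply/negP => /kmin; rewrite ltnn.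
rewrite /q -powR_exprn ?ler0n// !powRN.
rewrite lef_pV2 ?posrE ?powR_gt0 ?exprn_gt0 ?jbr_gt0 //.
apply: ge0_ler_powR; rewrite ?nnegrE ?exprn_ge0 //.
- exact: le_trans (normr_ge0 t) (jbr_ge_norm t).
- exact: le_trans jt (jbr_ge_norm t).
Qed.

End japanese_bracket.

Lemma measurable_dilate {R : realType} (psi : R -> R) (x a : R) :
  measurable_fun setT psi -> measurable_fun setT (fun y : R => psi ((x - y) / a)).
Proof.
move=> psi_meas; apply: measurableT_comp => //.
by apply: measurable_funM => //; exact: measurable_funB.
Qed.

Section dyadic_decomposition.
Context {R : realType} {C delta : R}.
Hypotheses (C_ge0 : 0 <= C) (delta_ge0 : 0 <= delta).
Let q : R := 2 `^ (- delta).
Let q_gt0 : 0 < q. Proof. by rewrite powR_gt0. Qed.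
Let c (k : nat) : R := C / q * q ^+ k.
Let c_ge0 k : 0 <= c k.
Proof. by rewrite /c !mulr_ge0 ?invr_ge0 ?exprn_ge0 ?(ltW q_gt0). Qed.

Let dyadic_term (x a : R) (k : nat) (y : R) : \bar R :=
  ((c k)%:E * (\1_(ball x (2 ^+ k * a)) y)%:E)%E.
Let dyadic_term_ge0 x a k y : (0 <= dyadic_term x a k y)%E.
Proof.
by rewrite /dyadic_term -EFinM lee_fin mulr_ge0 ?c_ge0 // indicE ler0n.
Qed.
Let measurable_dyadic_term x a k : measurable_fun [set: R] (dyadic_term x a k).
Proof.
apply: emeasurable_funM; first exact: measurable_cst.
by apply/measurable_EFinP; apply: measurable_indic; exact: measurable_ball.
Qed.

Lemma decay_le_dyadic_ball_series (psi : R -> R) (x a y : R) : 0 < a ->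
  (forall t, `|psi t| <= C * jbr t `^ (- delta)) ->
  ((`|psi ((x - y) / a)|)%:E <= \sum_(k <oo) dyadic_term x a k y)%E.
Proof.
move=> a0 psi_decay.
have [k [tk hk]] := jbr_powRN_le_dyadic ((x - y) / a) _ delta_ge0.
apply: (@le_trans _ _ (dyadic_term x a k y)).
  have xy_ball : ball x (2 ^+ k * a) y.
    by rewrite /ball /= -ltr_pdivrMr // -(gtr0_norm a0) -normf_div.
  rewrite /dyadic_term indicE mem_set // mule1 lee_fin.
  rewrite (le_trans (psi_decay _)) //.
  by rewrite /c -mulrA [q^-1 * _]mulrC ler_wpM2l.
apply: le_trans (nneseries_lim_ge k.+1 (fun n _ _ => dyadic_term_ge0 _ _ n _)).
by rewrite big_nat_recr //= lee_paddl // sume_ge0.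
Qed.

Lemma integral_dyadic_ball_series (mu : {measure set R -> \bar R}) (x a : R) :
  (\int[mu]_y \sum_(k <oo) dyadic_term x a k y =
   \sum_(k <oo) ((c k)%:E * mu (ball x (2 ^+ k * a))))%E.
Proof.
rewrite integral_nneseries //; apply: eq_eseriesr => k _.
rewrite ge0_integralZl_EFin ?c_ge0 // ?integral_indic ?setIT //.
- exact: measurable_ball.
- by apply/measurable_EFinP; apply: measurable_indic; exact: measurable_ball.
Qed.

Lemma integral_decay_dilate_le (mu : {measure set R -> \bar R}) (psi : R -> R)
    (x K alpha : R) :
  measurable_fun setT psi -> 0 <= alpha -> alpha < delta -> 0 <= K ->
  (forall t, `|psi t| <= C * jbr t `^ (- delta)) ->
  (forall e, 0 < e -> (mu (ball x e) <= (K * e `^ alpha)%:E)%E) ->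
  exists M : R, forall a, 0 < a ->
    (\int[mu]_y (`|psi ((x - y) / a)|)%:E <= (M * a `^ alpha)%:E)%E.
Proof.
move=> psi_meas alpha_ge0 alpha_lt K_ge0 psi_decay mu_ball.
set rho := q * 2 `^ alpha.
have rho_ge0 : 0 <= rho by rewrite mulr_ge0 ?powR_ge0 ?ltW.
have rho_lt1 : rho < 1.
  rewrite /rho /q -powRD ?pnatr_eq0 ?implybT //.
  by rewrite powR_lt1 ?ltr1n // addrC subr_lt0.
exists (C / q * K * (1 - rho)^-1) => a a_gt0.
have mu_dyadic k : (mu (ball x (2 ^+ k * a)) <=
    (K * ((2 `^ alpha) ^+ k * a `^ alpha))%:E)%E.
  apply: (le_trans (mu_ball _ _)); first by rewrite mulr_gt0 ?exprn_gt0.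
  by rewrite powRM ?exprn_ge0 ?(ltW a_gt0) // powR_exprn.
apply: (@le_trans _ _ (\sum_(k <oo) ((c k)%:E * mu (ball x (2 ^+ k * a))))%E).
  rewrite -integral_dyadic_ball_series; apply: ge0_le_integral => //.
  - apply/measurable_EFinP; apply: measurableT_comp => //.
    exact: measurable_dilate.
  - by apply: ge0_emeasurable_sum => // k y _ _; exact: dyadic_term_ge0.
  - by move=> y _; exact: decay_le_dyadic_ball_series.
apply: (@le_trans _ _
    (\sum_(k <oo) ((C / q * K * a `^ alpha)%:E * (rho ^+ k)%:E))%E).
  apply: lee_nneseries => [k _ _|k _]; first by rewrite mule_ge0 ?lee_fin ?c_ge0.
  apply: le_trans (lee_wpmul2l _ (mu_dyadic k)) _; first by rewrite lee_fin c_ge0.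
  rewrite -EFinM lee_fin le_eqVlt /c /rho exprMn; apply/orP; left; apply/eqP.
  ring.
rewrite nneseriesZl; last by move=> k _; rewrite lee_fin exprn_ge0.
rewrite nneseries_geometric ?rho_ge0 ?rho_lt1 // -EFinM lee_fin le_eqVlt.
by apply/orP; left; apply/eqP; ring.
Qed.

End dyadic_decomposition.

Section upper_density.
Context {R : realType} {mu : probability R R} {alpha x : R}.

Lemma Dalpha_fin_num_ball_le : 0 <= alpha -> Dalpha alpha mu x \is a fin_num ->
  exists2 K : R, 0 <= K &
    forall e, 0 < e -> (mu (ball x e) <= (K * e `^ alpha)%:E)%E.
Proof.
move=> alpha_ge0 /limf_esup_fin_num_ubound[M /near_right0P[e0 e0_gt0 small_e]].
exists (Num.max (M * 2 `^ alpha) ((e0 `^ alpha)^-1)).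
  by rewrite le_max invr_ge0 powR_ge0 orbT.
move=> e e_gt0; have mu_fin := fin_num_measure mu _ (measurable_ball x e).
have [e_small|e_large] := ltP e e0.
- have := small_e e; rewrite e_gt0 e_small -ball_itv => /(_ isT).
  rewrite -(fineK mu_fin) -EFinM !lee_fin ler_pdivrMr ?powR_gt0 ?mulr_gt0 //.
  move/le_trans; apply; rewrite powRM ?ler0n ?(ltW e_gt0) // mulrA.
  by rewrite ler_wpM2r ?powR_ge0 // le_max lexx.
- apply: (le_trans (probability_le1 _ (measurable_ball x e))); rewrite lee_fin.
  apply: (@le_trans _ _ ((e0 `^ alpha)^-1 * e `^ alpha)); last first.
    by rewrite ler_wpM2r ?powR_ge0 // le_max lexx orbT.
  rewrite mulrC ler_pdivlMr ?powR_gt0 // mul1r.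
  by rewrite ge0_ler_powR // nnegrE ltW // (lt_le_trans e0_gt0 e_large).
Qed.

End upper_density.

Section convolution_bounds.
Context {R : realType} {mu : probability R R} {psi : R -> R} {alpha x : R}.
Hypothesis psi_meas : measurable_fun setT psi.

Lemma conv_scaled_ge_ball : {for 0, continuous psi} -> 0 < psi 0 ->
  (forall t, 0 <= psi t) ->
  exists2 r : R, 0 < r & forall a, 0 < a ->
    ((psi 0 / 2)%:E * mu (ball x (r * a)) <= conv_scaled psi mu a x)%E.
Proof.
move=> psi_cont psi0_gt0 psi_ge0.
have half_gt0 : 0 < psi 0 / 2 by rewrite divr_gt0.
have [r /= r_gt0 near0] :=
  @cvgr_dist_lt _ _ _ (nbhs (0 : R)) _ psi _ psi_cont _ half_gt0.
exists r => // a a_gt0.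
have ball_meas := measurable_ball x (r * a).
rewrite -[ball x (r * a)]setIT -integral_indic //.
rewrite -ge0_integralZl_EFin ?(ltW half_gt0) //; last first.
  by apply/measurable_EFinP; exact: measurable_indic.
apply: ge0_le_integral => //.
- by move=> y _; rewrite -EFinM lee_fin mulr_ge0 ?(ltW half_gt0) // indicE ler0n.
- apply: emeasurable_funM; first exact: measurable_cst.
  by apply/measurable_EFinP; exact: measurable_indic.
- by apply/measurable_EFinP; exact: measurable_dilate.
move=> y _; rewrite -EFinM lee_fin indicE.
have [/set_mem y_ball|_] := boolP (y \in (ball x (r * a) : set R));
  last by rewrite mulr0.
have : `|psi 0 - psi ((x - y) / a)| < psi 0 / 2.
  apply: near0; rewrite /ball /= sub0r normrN normf_div (gtr0_norm a_gt0).
  by rewrite ltr_pdivrMr.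
rewrite mulr1 ltr_distlC => /andP[+ _]; lra.
Qed.

Lemma Calpha_fin_num_of_Dalpha {C delta : R} :
  0 <= C -> 0 <= alpha -> alpha < delta ->
  (forall t, `|psi t| <= C * jbr t `^ (- delta)) ->
  Dalpha alpha mu x \is a fin_num -> Calpha alpha mu psi x \is a fin_num.
Proof.
move=> C_ge0 alpha_ge0 alpha_lt psi_decay.
move=> /(Dalpha_fin_num_ball_le alpha_ge0)[K K_ge0 mu_ball].
have delta_ge0 := le_trans alpha_ge0 (ltW alpha_lt).
have [M int_le] := integral_decay_dilate_le C_ge0 delta_ge0 mu psi x K alpha
  psi_meas alpha_ge0 alpha_lt K_ge0 psi_decay mu_ball.
apply: (@limf_esup_fin_num _ _ _ _ _ (- M) M).
apply: filterS (nbhs_right_gt 0) => a a_gt0.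
have conv_le : (`|conv_scaled psi mu a x| <= (M * a `^ alpha)%:E)%E.
  apply: le_trans (int_le a a_gt0).
  apply: le_abse_integral => //.
  by apply/measurable_EFinP; exact: measurable_dilate.
move: conv_le; rewrite /conv_scaled.
case: (\int[mu]_y _)%E => [c| |] //= c_le.
have s_gt0 : 0 < a `^ alpha by rewrite powR_gt0.
by rewrite -EFinM !lee_fin -ler_norml normrM normfV (gtr0_norm s_gt0) ler_pdivrMr.
Qed.

Lemma Dalpha_fin_num_of_Calpha : {for 0, continuous psi} -> 0 < psi 0 ->
  (forall t, 0 <= psi t) ->
  Calpha alpha mu psi x \is a fin_num -> Dalpha alpha mu x \is a fin_num.
Proof.
move=> psi_cont psi0_gt0 psi_ge0.
have [r r_gt0 conv_ge] := conv_scaled_ge_ball psi_cont psi0_gt0 psi_ge0.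
move=> /limf_esup_fin_num_ubound[M /near_right0P[a0 a0_gt0 conv_le]].
apply: (@limf_esup_fin_num _ _ _ _ _ 0 (2 * M / (psi 0 * (2 * r) `^ alpha))).
apply/near_right0P; exists (r * a0); first by rewrite mulr_gt0.
move=> e /andP[e_gt0 e_lt]; rewrite -ball_itv.
apply/andP; split; first by rewrite mule_ge0 // lee_fin invr_ge0 powR_ge0.
set a := e / r; have a_gt0 : 0 < a by rewrite divr_gt0.
have e_ra : e = r * a by rewrite /a mulrC divfK // gt_eqF.
have s_gt0 : 0 < a `^ alpha by rewrite powR_gt0.
have conv_le_a : (conv_scaled psi mu a x <= (M * a `^ alpha)%:E)%E.
  have := conv_le a; rewrite a_gt0 ltr_pdivrMr // mulrC e_lt => /(_ isT).
  move/(@lee_wpmul2r _ (a `^ alpha)%:E); rewrite lee_fin (ltW s_gt0) => /(_ isT).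
  by rewrite -muleA -EFinM mulVf ?gt_eqF // mule1 -EFinM.
have := le_trans (conv_ge a a_gt0) conv_le_a; rewrite -e_ra.
rewrite -(fineK (fin_num_measure mu _ (measurable_ball x e))).
set m := fine _; rewrite -!EFinM !lee_fin => m_le.
have S_gt0 : 0 < (2 * r) `^ alpha by rewrite powR_gt0 ?mulr_gt0.
rewrite e_ra mulrA powRM ?(ltW a_gt0) ?mulr_ge0 ?(ltW r_gt0) //.
rewrite ler_pdivrMr ?mulr_gt0 //.
have -> : 2 * M / (psi 0 * (2 * r) `^ alpha) * ((2 * r) `^ alpha * a `^ alpha) =
    M * a `^ alpha / (psi 0 / 2).
  by field; rewrite !gt_eqF.
by rewrite ler_pdivlMr ?divr_gt0 // mulrC.
Qed.

End convolution_bounds.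

Theorem theorem2p9 (R : realType) (psi : R -> R)
  (psi_derivable : forall x : R, derivable psi x 1)
  (psi'_cont : continuous (derive1 psi))
  (psi0 : psi 0 = 1)
  (psi_even : forall x : R, psi (- x) = psi x)
  (psi_decay : exists C delta : R, 0 < C /\ 1 < delta /\
     forall x : R, `|psi x| + `|x * derive1 psi x| <= C * (jbr x) `^ (- delta))
  (A_psi_neq0 : (\int[lebesgue_measure]_x (psi x)%:E)%E != 0%E)
  (mu : probability R R) (alpha : R) (alpha_ge0 : 0 <= alpha)
  (alpha_le1 : alpha <= 1) :
  (forall x : R, Dalpha alpha mu x \is a fin_num ->
                 Calpha alpha mu psi x \is a fin_num) /\
  ((forall x : R, 0 <= psi x) ->
   forall x : R, (Calpha alpha mu psi x \is a fin_num <->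
                  Dalpha alpha mu x \is a fin_num)).
Proof.
have psi_cont : continuous psi.
  by move=> t; apply/differentiable_continuous/derivable1_diffP.
have psi_meas := continuous_measurable_fun psi_cont.
have [C [delta [C_gt0 [delta_gt1 psi_bound]]]] := psi_decay.
have psi_jbr t : `|psi t| <= C * jbr t `^ (- delta).
  by apply: le_trans (psi_bound t); rewrite lerDl.
have alpha_lt : alpha < delta := le_lt_trans alpha_le1 delta_gt1.
have D_to_C :=
  Calpha_fin_num_of_Dalpha psi_meas (ltW C_gt0) alpha_ge0 alpha_lt psi_jbr.
have psi0_gt0 : 0 < psi 0 by rewrite psi0.
split=> [x|psi_ge0 x]; first exact: D_to_C.
split=> [|/D_to_C//].
exact: Dalpha_fin_num_of_Calpha psi_meas (psi_cont 0) psi0_gt0 psi_ge0.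
Qed.
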